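(* Let $c$ be a real number with $2<c<4$. There exists $k_0(c)$ such that for all integers $k>k_0(c)$ for which $n=ck$ is an integer, the family $$\mathcal A_k(n,k)=\Big\{A\in\binom{[n]}{k}: 1\in A,\ A\cap[2,k+1]\neq\varnothing\Big\}\cup\{[2,k+1]\}$$ is intersecting and satisfies $$|\mathcal D(\mathcal A_k(n,k))|>\sum_{0\le\ell<k}\binom{n-1}{\ell}.$$
   Context: $[n]=\{1,\dots,n\}$, $[a,b]=\{a,a+1,\dots,b\}$; $\binom{[n]}{k}$ is the family of all $k$-element subsets of $[n]$. $\mathcal D(\mathcal F):=\{F\setminus F' : F,F'\in\mathcal F\}$. *)

From HB Require Import structures.
From mathcomp Require Import all_boot all_order all_algebra.
From mathcomp Require Import reals.
Set Implicit Arguments. Unset Strict Implicit. Unset Printing Implicit Defensive.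

(* The ground set [n] = {1,...,n} is modelled inside 'I_n.+1 = {0,...,n}
   as the elements i with 0 < i. *)
Definition ground (n : nat) : {set 'I_n.+1} := [set i : 'I_n.+1 | 0 < i].

Definition one_elt (n : nat) : 'I_n.+1 := inord 1.

Definition intv (n a b : nat) : {set 'I_n.+1} :=
  [set i : 'I_n.+1 | (0 < i) && (a <= i) && (i <= b)].

Definition ksets (n k : nat) : {set {set 'I_n.+1}} :=
  [set A : {set 'I_n.+1} | (A \subset ground n) && (#|A| == k)].

Definition Akfam (n k : nat) : {set {set 'I_n.+1}} :=
  [set A in ksets n k | (one_elt n \in A) && (A :&: intv n 2 k.+1 != set0)]
  :|: [set intv n 2 k.+1].

Definition diffs (n : nat) (F : {set {set 'I_n.+1}}) : {set {set 'I_n.+1}} :=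
  [set A :\: B | A in F, B in F].

Definition intersecting (n : nat) (F : {set {set 'I_n.+1}}) : Prop :=
  forall A B, A \in F -> B \in F -> A :&: B != set0.

(* Write B0 = [2,k+1] and Y = [k+2,n].  Intersection is immediate:
   all members but B0 contain 1 and every member meets B0.  For the
   differences we exhibit two disjoint subfamilies of D:
   - every subset of [2,n] with fewer than k elements, except the
     (k-1)-subsets of Y (sum_(l<k) C(n-1,l) - C(n-k-1,k-1) sets);
   - every set {1} u T with T a subset of Y of size < k-1
     (sum_(l<k-1) C(n-k-1,l) sets).
   Each is realised as (T u U) \ V with T u U, V in A_k(n,k), U in V and T
   disjoint from V.  The theorem then reduces to the binomial estimate
   C(n-k-1,k-1) < sum_(l<k-1) C(n-k-1,l), which holds for k large because
   near l = k-1 consecutive coefficients of that row have ratio close to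
   1/(c-2) > 1/2, so a bounded number of terms below C(n-k-1,k-1) already
   outweighs it (a geometric series of ratio > 1/2 exceeds 1). *)

From HB Require Import structures.
From mathcomp Require Import all_boot all_order all_algebra.
From mathcomp Require Import reals.
From mathcomp Require Import zify ring lra.
Import Order.TTheory GRing.Theory Num.Theory.
Set Implicit Arguments. Unset Strict Implicit. Unset Printing Implicit Defensive.

Section FiniteSets.
Variable T : finType.
Implicit Types A B U V X : {set T}.

Lemma card_disjointU A B : [disjoint A & B] -> #|A :|: B| = #|A| + #|B|.
Proof. by move=> dAB; rewrite cardsU disjoint_setI0 // cards0 subn0. Qed.

Lemma exists_subset_card X s : s <= #|X| -> exists2 Y : {set T}, Y \subset X & #|Y| = s.
Proof.
move=> sX; have : 0 < #|[set Y : {set T} | Y \subset X & #|Y| == s]|.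
  by rewrite cards_draws bin_gt0.
by case/card_gt0P => Y; rewrite inE => /andP[YX /eqP cY]; exists Y.
Qed.

Lemma exists_subset_card_mem X x s : x \in X -> 0 < s <= #|X| ->
  exists Y : {set T}, [/\ Y \subset X, x \in Y & #|Y| = s].
Proof.
move=> xX /andP[s0 sX].
have [Y YX cY] : exists2 Y : {set T}, Y \subset X :\ x & #|Y| = s.-1.
  by apply: exists_subset_card; rewrite (cardsD1 x X) xX in sX; lia.
have xY : x \notin Y by apply/negP => /(subsetP YX); rewrite !inE eqxx.
exists (x |: Y); split; last by rewrite cardsU1 xY cY; lia.
  by rewrite subUset sub1set xX (subset_trans YX) ?subD1set.
by rewrite setU11.
Qed.

Lemma disjoint_setU1 A B x : x \notin A -> [disjoint A & B] -> [disjoint A & x |: B].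
Proof.
move=> xA dAB; apply/pred0P => y /=; rewrite in_setU1.
by case: (eqVneq y x) => [->|_]; [rewrite (negbTE xA) | exact: (pred0P dAB)].
Qed.

Lemma setDU_absorb A U V : U \subset V -> [disjoint A & V] -> (A :|: U) :\: V = A.
Proof.
move=> UV dAV; rewrite setDUl (setDidPl dAV).
by move: UV; rewrite -setD_eq0 => /eqP ->; rewrite setU0.
Qed.

End FiniteSets.

Lemma card_small_subsets (T : finType) (X : {set T}) s :
  #|[set Y : {set T} | Y \subset X & #|Y| < s]| = \sum_(0 <= l < s) 'C(#|X|, l).
Proof.
elim: s => [|s IH].
  by rewrite big_nil; apply/eqP; rewrite cards_eq0; apply/eqP/setP => Y; rewrite !inE ltn0 andbF.
have -> : [set Y : {set T} | Y \subset X & #|Y| < s.+1] =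
    [set Y : {set T} | Y \subset X & #|Y| < s] :|: [set Y : {set T} | Y \subset X & #|Y| == s].
  by apply/setP => Y; rewrite !inE ltnS leq_eqVlt andb_orr orbC.
rewrite card_disjointU ?big_nat_recr //= -?IH -?cards_draws //.
rewrite -setI_eq0; apply/eqP/setP => Y; rewrite !inE.
by apply/negP => /andP[/andP[_ lt] /andP[_ /eqP eq]]; rewrite eq ltnn in lt.
Qed.

Lemma card_ord_range N a b : b <= N -> #|[set i : 'I_N | a <= i < b]| = b - a.
Proof.
elim: b => [|b IH] bN.
  by apply/eqP; rewrite cards_eq0; apply/eqP/setP => i; rewrite !inE ltn0 andbF.
have [ab|ba] := leqP a b; last first.
  have -> : b.+1 - a = 0 by apply/eqP; rewrite subn_eq0.
  apply/eqP; rewrite cards_eq0; apply/eqP/setP => i; rewrite !inE.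
  by apply/negP => /andP[ai ib]; lia.
have -> : [set i : 'I_N | a <= i < b.+1] = Ordinal bN |: [set i : 'I_N | a <= i < b].
  apply/setP => i; rewrite !inE -val_eqE /=.
  case: (eqVneq (val i) b) => [->|ne] /=; first by rewrite ab ltnSn.
  by rewrite ltnS [i <= b]leq_eqVlt (negbTE ne).
by rewrite cardsU1 inE ltnn andbF IH ?(ltnW bN) //; lia.
Qed.

Lemma card_intv n a b : 0 < a -> b <= n -> #|intv n a b| = b.+1 - a.
Proof.
move=> a0 bn; rewrite -(@card_ord_range n.+1) //; apply: eq_card => i; rewrite !inE ltnS.
by case: (leqP a i) => ai; rewrite ?andbF //= (leq_trans a0 ai).
Qed.

Section AkFamily.
Variables n k : nat.
Hypothesis k_gt1 : 1 < k.
Hypothesis n_ge2k : 2 * k <= n.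

Local Notation I := 'I_n.+1.
Local Notation one := (one_elt n).
Local Notation B0 := (intv n 2 k.+1).
Local Notation G := (intv n 2 n).
Local Notation Y := (intv n k.+2 n).
Local Notation D := (diffs (Akfam n k)).

Lemma val_one : val one = 1.
Proof. by rewrite /one_elt /= inordK //; lia. Qed.

Lemma one_notin_intv a b : 1 < a -> one \notin intv n a b.
Proof. by move=> a_gt1; rewrite inE val_one; apply/negP => /andP[/andP[_ a1] _]; lia. Qed.

Lemma intv_ground a b : intv n a b \subset ground n.
Proof. by apply/subsetP => x; rewrite !inE => /andP[/andP[-> _] _]. Qed.

Lemma subG_ground (S : {set I}) : S \subset G -> S \subset ground n.
Proof. by move=> SG; apply: subset_trans SG (intv_ground _ _). Qed.

Lemma one_notin_subG (S : {set I}) : S \subset G -> one \notin S.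
Proof. by move=> SG; apply/negP => /(subsetP SG); apply/negP; apply: one_notin_intv. Qed.

Lemma card_B0 : #|B0| = k.      Proof. by rewrite card_intv //; lia. Qed.
Lemma card_G : #|G| = n.-1.     Proof. by rewrite card_intv //; lia. Qed.
Lemma card_Y : #|Y| = n - k.+1. Proof. by rewrite card_intv //; lia. Qed.

Lemma B0_sub_G : B0 \subset G.
Proof.
apply/subsetP => x; rewrite !inE => /andP[/andP[-> ->] _] /=.
by rewrite -ltnS ltn_ord.
Qed.

Lemma Y_sub_G : Y \subset G.
Proof. by apply/subsetP => x; rewrite !inE => /andP[/andP[-> ?] ->]; lia. Qed.

Lemma disjoint_B0_Y : [disjoint B0 & Y].
Proof. by rewrite -setI_eq0; apply/eqP/setP => x; rewrite !inE; lia. Qed.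

Lemma G_sub_B0Y : G \subset B0 :|: Y.
Proof. by apply/subsetP => x; rewrite !inE; lia. Qed.

Lemma mem_Akfam (A : {set I}) x : A \subset ground n -> #|A| = k -> one \in A ->
  x \in A -> x \in B0 -> A \in Akfam n k.
Proof.
move=> Ag cA oA xA xB0; rewrite !inE Ag cA eqxx oA /=; apply/orP; left.
by apply/set0Pn; exists x; rewrite inE xA.
Qed.

Lemma B0_Akfam : B0 \in Akfam n k.
Proof. by rewrite !inE eqxx orbT. Qed.

(* The family is intersecting: all sets but B0 contain 1, and they all meet B0. *)
Lemma Akfam_intersecting : intersecting (Akfam n k).
Proof.
have B0_n0 : B0 != set0 by rewrite -card_gt0 card_B0; lia.
move=> A B; rewrite !inE.
case/orP => [/andP[_ /andP[oA AB0]]|/eqP ->]; case/orP => [/andP[_ /andP[oB BB0]]|/eqP ->] //.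
- by apply/set0Pn; exists one; rewrite inE oA oB.
- by rewrite setIC.
- by rewrite setIid.
Qed.

Lemma diffs_witness (T U V : {set I}) : T :|: U \in Akfam n k -> V \in Akfam n k ->
  U \subset V -> [disjoint T & V] -> T \in D.
Proof.
by move=> TU_A V_A UV dTV; rewrite -(setDU_absorb UV dTV); apply/imset2P; exists (T :|: U) V.
Qed.

Lemma oneU_Akfam (S : {set I}) x : S \subset G -> #|S| = k.-1 -> x \in S -> x \in B0 ->
  one |: S \in Akfam n k.
Proof.
move=> SG cS xS xB0; apply: (mem_Akfam _ _ _ _ xB0); rewrite ?setU11 ?setU1r //.
  by rewrite subUset sub1set !inE val_one subG_ground.
by rewrite cardsU1 (one_notin_subG SG) cS /= add1n (ltn_predK k_gt1).
Qed.

(* Every subset T of [2, n] with |T| < k lies in D, unless T is a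
   (k-1)-subset of Y: choose b in B0 \ T and a (k-1)-set F of [2, n] \ T
   containing b; then T = ({1} u T u H) \ ({1} u F) for a suitable H in F
   making {1} u T u H meet B0 (H contains b, or T already meets B0). *)
Lemma small_subset_diffs (T : {set I}) : T \subset G -> #|T| < k ->
  ~~ ((T \subset Y) && (#|T| == k.-1)) -> T \in D.
Proof.
move=> TG cT notQ.
have cTk : #|T| <= k.-1 by rewrite -ltnS (ltn_predK k_gt1).
have [b bB0 bT] : exists2 b : I, b \in B0 & b \notin T.
  by apply/subsetPn; apply/negP => /subset_leq_card; rewrite card_B0 leqNgt cT.
have [F [FGT bF cF]] : exists F : {set I}, [/\ F \subset G :\: T, b \in F & #|F| = k.-1].
  apply: exists_subset_card_mem; first by rewrite in_setD bT (subsetP B0_sub_G).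
  by rewrite cardsD (setIidPr TG) card_G; lia.
have [FG dTF] : F \subset G /\ [disjoint T & F].
  by move: FGT; rewrite subsetD disjoint_sym => /andP[].
have [H [HF cH [x xTH xB0]]] : exists H : {set I}, [/\ H \subset F,
    #|H| = k.-1 - #|T| & exists2 x : I, x \in T :|: H & x \in B0].
  have [cT'|cT'] := ltnP #|T| k.-1.
    have [H [HF bH cH]] : exists H : {set I}, [/\ H \subset F, b \in H & #|H| = k.-1 - #|T|].
      by apply: exists_subset_card_mem; rewrite // cF subn_gt0 cT' leq_subr.
    by exists H; split=> //; exists b => //; rewrite inE bH orbT.
  exists set0; split; rewrite ?sub0set ?cards0 //; first by apply/esym/eqP; rewrite subn_eq0.
  have TY : ~~ (T \subset Y) by move: notQ; rewrite eqn_leq cTk cT' !andbT.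
  have [x xT xY] := subsetPn TY.
  have := subsetP G_sub_B0Y x (subsetP TG x xT); rewrite inE (negbTE xY) orbF.
  by exists x; rewrite ?setU0.
have dT1F := disjoint_setU1 (one_notin_subG TG) dTF.
apply: (diffs_witness (U := one |: H) _ (oneU_Akfam FG cF bF bB0) (setUS _ HF) dT1F).
rewrite setUCA; apply: (oneU_Akfam _ _ xTH xB0).
  by rewrite subUset TG (subset_trans HF FG).
rewrite card_disjointU ?cH ?subnKC //.
by apply: disjointWr dTF.
Qed.

(* For every subset T of Y with |T| < k - 1, the set {1} u T lies in D:
   it is ({1} u T u H) \ B0 for any (k-1-|T|)-subset H of B0. *)
Lemma one_subset_diffs (T : {set I}) : T \subset Y -> #|T| < k.-1 -> one |: T \in D.
Proof.
move=> TY cT.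
have [H HB0 cH] : exists2 H : {set I}, H \subset B0 & #|H| = k.-1 - #|T|.
  by apply: exists_subset_card; rewrite card_B0; lia.
have [h hH] : exists h, h \in H by apply/card_gt0P; rewrite cH subn_gt0.
have dTB0 : [disjoint one |: T & B0].
  rewrite disjoint_sym disjoint_setU1 ?one_notin_intv //.
  by apply: disjointWr TY disjoint_B0_Y.
apply: (diffs_witness _ B0_Akfam HB0 dTB0).
rewrite -setUA; apply: (oneU_Akfam _ _ (_ : h \in T :|: H) (subsetP HB0 h hH)).
- by rewrite subUset (subset_trans TY Y_sub_G) (subset_trans HB0 B0_sub_G).
- rewrite card_disjointU ?cH ?subnKC 1?ltnW //.
  by apply: disjointWr HB0 _; rewrite disjoint_sym; apply: disjointWr TY disjoint_B0_Y.
- by rewrite in_setU hH orbT.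
Qed.

(* Counting the two kinds of differences above: D contains all subsets of
   [2, n] of size < k except the C(n-k-1, k-1) (k-1)-subsets of Y, and the
   sets {1} u T with T a subset of Y of size < k-1, which contain 1. *)
Lemma diffs_lower_bound :
  \sum_(0 <= l < k) 'C(n.-1, l) + \sum_(0 <= l < k.-1) 'C(n - k.+1, l)
  <= #|D| + 'C(n - k.+1, k.-1).
Proof.
set P := [set T : {set I} | T \subset G & #|T| < k].
set Q := [set T : {set I} | T \subset Y & #|T| == k.-1].
set S := [set T : {set I} | T \subset Y & #|T| < k.-1].
set R := [set one |: T | T in S].
have cR : #|R| = \sum_(0 <= l < k.-1) 'C(n - k.+1, l).
  rewrite card_in_imset ?card_small_subsets ?card_Y // => T1 T2.
  rewrite !inE => /andP[T1Y _] /andP[T2Y _] eT.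
  have oT1 := one_notin_subG (subset_trans T1Y Y_sub_G).
  have oT2 := one_notin_subG (subset_trans T2Y Y_sub_G).
  by rewrite -(setU1K oT1) eT setU1K.
have PQR_D : (P :\: Q) :|: R \subset D.
  apply/subsetP => T; rewrite in_setU => /orP[].
  - by rewrite !inE => /andP[notQ /andP[TG cT]]; apply: small_subset_diffs.
  - by case/imsetP => T'; rewrite inE => /andP[T'Y cT'] ->; apply: one_subset_diffs.
have dPR : [disjoint P :\: Q & R].
  apply/pred0P => T /=; apply/negbTE/andP => -[]; rewrite !inE => /andP[_ /andP[TG _]].
  by case/imsetP => T' _ eT; move: TG; rewrite eT subUset sub1set (negbTE (one_notin_intv _ _)) //=; lia.
rewrite -cR -card_G -card_small_subsets -/P -card_Y -cards_draws -/Q.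
rewrite -(cardsID Q P) -addnA -card_disjointU // addnC leq_add ?subset_leq_card //.
by rewrite subsetIr.
Qed.
End AkFamily.

Section BinomialTail.
Local Open Scope ring_scope.

Lemma expr_tail_le1 (R : realFieldType) (r : R) (t : nat) : 0 <= r -> r <= 1 ->
  r ^+ t * (1 + t%:R * (1 - r)) <= 1.
Proof.
move=> r0 r1; elim: t => [|t IH]; first by rewrite expr0 mul0r addr0 mulr1.
have rt0 : 0 <= r ^+ t by apply: exprn_ge0.
have rt1 : r ^+ t <= 1 by apply: exprn_ile1.
have h1 : r * (r ^+ t * (1 + t%:R * (1 - r))) <= r * 1 by apply: ler_wpM2l.
have h2 : r ^+ t * (r * (1 - r)) <= 1 * (r * (1 - r)) by apply: ler_wpM2r => //; nra.
rewrite exprS -natr1; nra.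
Qed.

Lemma geometric_sum (R : comNzRingType) (r : R) (t : nat) :
  (\sum_(1 <= p < t.+1) r ^+ p) * (1 - r) = r - r ^+ t.+1.
Proof.
elim: t => [|t IH]; first by rewrite big_geq // mul0r expr1 subrr.
by rewrite big_nat_recr //= mulrDl IH !exprS; ring.
Qed.

(* For r > 1/2 some partial sum r + ... + r^t exceeds 1 (its limit r/(1-r)
   does when r < 1). *)
Lemma geometric_sum_gt1 (R : archiRealFieldType) (r : R) : 1 / 2 < r ->
  exists t : nat, 1 < \sum_(1 <= p < t.+1) r ^+ p.
Proof.
move=> r_gt.
have [r_ge1|r_lt1] := leP 1 r.
  exists 2%N; rewrite big_nat_recr //= big_nat_recr //= big_geq // add0r expr1.
  have : 1 <= r ^+ 2 by apply: exprn_ege1.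
  lra.
have pos : 0 < (2 * r - 1) * (1 - r) by apply: mulr_gt0; lra.
set x := ((2 * r - 1) * (1 - r))^-1.
exists (Num.truncn x).+1; set t := (Num.truncn x).+1.
have t_big : 1 < t%:R * (1 - r) * (2 * r - 1).
  have : x * ((2 * r - 1) * (1 - r)) < t%:R * ((2 * r - 1) * (1 - r)).
    by rewrite ltr_pM2r // truncnS_gt.
  by rewrite mulVf ?gt_eqF // -mulrA [(1 - r) * _]mulrC.
have r0 : 0 <= r by lra.
have tail := expr_tail_le1 t r0 (ltW r_lt1).
have tr0 : 0 <= t%:R * (1 - r) by apply: mulr_ge0; [apply: ler0n | lra].
have rt0 : 0 <= r ^+ t by apply: exprn_ge0.
have rt1 : r ^+ t.+1 <= r ^+ t by rewrite exprS ler_piMl // ltW.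
have := geometric_sum r t.
nra.
Qed.

Lemma geometric_decay (R : realFieldType) (a : nat -> R) (rho : R) (j t : nat) :
  0 <= rho -> (forall u, (j - t <= u < j)%N -> rho * a u.+1 <= a u) ->
  forall i, (i <= t)%N -> (i <= j)%N -> rho ^+ i * a j <= a (j - i)%N.
Proof.
move=> rho0 step; elim=> [|i IH] it ij; first by rewrite expr0 mul1r subn0.
rewrite exprS -mulrA; apply: le_trans (step _ _); last by apply/andP; split; lia.
rewrite ler_wpM2l // (_ : (j - i.+1).+1 = j - i)%N; last by lia.
by apply: IH; lia.
Qed.

Lemma geometric_lower (R : realFieldType) (a : nat -> R) (rho : R) (j t : nat) :
  0 <= rho -> (t <= j)%N -> (forall u, (j - t <= u < j)%N -> rho * a u.+1 <= a u) ->
  a j * \sum_(1 <= p < t.+1) rho ^+ p <= \sum_(j - t <= l < j) a l.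
Proof.
move=> rho0; elim: t => [|t IH] tj step; first by rewrite !big_geq ?subn0 ?mulr0.
rewrite big_nat_recr //= mulrDr (@big_ltn _ _ _ (j - t.+1)) 1?addrC; last by lia.
rewrite (_ : (j - t.+1).+1 = j - t)%N; last by lia.
apply: lerD; first by rewrite mulrC; apply: (geometric_decay rho0 step).
by apply: IH => [|u /andP[ju uj]]; [lia | apply: step; apply/andP; split; lia].
Qed.

(* One step down along a row of Pascal's triangle: C(m, u) / C(m, u+1) =
   (u + 1) / (m - u). *)
Lemma binom_step (R : realFieldType) (rho : R) (m u : nat) : 0 <= rho ->
  rho * (m - u)%:R <= u.+1%:R -> rho * 'C(m, u.+1)%:R <= 'C(m, u)%:R.
Proof.
move=> rho0 ratio.
have pascal : u.+1%:R * 'C(m, u.+1)%:R = (m - u)%:R * 'C(m, u)%:R :> R.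
  by rewrite -!natrM mul_bin_left.
rewrite -(ler_pM2l (ltr0Sn R u)) mulrCA pascal mulrA.
by apply: ler_wpM2r => //; rewrite mulrC.
Qed.

Lemma binom_tail_lower (R : realFieldType) (rho : R) (m j t : nat) :
  0 <= rho -> (t <= j)%N -> rho * (m - (j - t))%:R <= (j - t).+1%:R ->
  'C(m, j)%:R * \sum_(1 <= p < t.+1) rho ^+ p <= \sum_(0 <= l < j) 'C(m, l)%:R.
Proof.
move=> rho0 tj ratio.
apply: le_trans (_ : \sum_(j - t <= l < j) 'C(m, l)%:R <= _).
  apply: (geometric_lower (a := fun l => 'C(m, l)%:R)) => // u /andP[ju uj].
  apply: binom_step => //.
  apply: le_trans (_ : rho * (m - (j - t))%:R <= _); first by rewrite ler_wpM2l // ler_nat; lia.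
  by apply: le_trans ratio _; rewrite ler_nat; lia.
rewrite [X in _ <= X](@big_cat_nat _ _ _ (j - t)) //=; last by lia.
by apply: ler_wpDl; rewrite ?sumr_ge0.
Qed.

(* The ratio rho = c / (4 (c - 2)) used below: rho > 1/2 exactly because c < 4,
   and rho (c - 2) k = c k / 4 leaves room (1 - c/4) k to absorb errors. *)
Lemma ratio_bound (R : realFieldType) (c : R) : 2 < c -> c < 4 ->
  exists2 rho : R, 1 / 2 < rho & rho * (c - 2) = c / 4.
Proof.
move=> c_gt2 c_lt4; exists (c / (4 * (c - 2))); last first.
  by field; rewrite gt_eqF ?subr_gt0.
rewrite ltr_pdivlMr ?mulr_gt0 ?subr_gt0 //; lra.
Qed.

(* For n = c k with 2 < c < 4 and k large, the binomial coefficient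
   C(n-k-1, k-1) is smaller than the sum of all earlier ones in its row:
   near l = k - 1 consecutive coefficients have ratio about 1/(c-2) > 1/2,
   so a fixed number t of terms below it already outweighs it. *)
Lemma binom_tail_dominates (R : archiRealFieldType) (c : R) : 2 < c -> c < 4 ->
  exists k0 : nat, forall k n : nat, (k0 < k)%N -> n%:R = c * k%:R ->
  [/\ (1 < k)%N, (2 * k <= n)%N &
      ('C(n - k.+1, k.-1) < \sum_(0 <= l < k.-1) 'C(n - k.+1, l))%N].
Proof.
move=> c_gt2 c_lt4; have [rho rho_gt rho_c] := ratio_bound c_gt2 c_lt4.
have [t sum_gt1] := geometric_sum_gt1 rho_gt.
set K := t%:R * (1 + rho) / (1 - c / 4).
exists (Num.truncn K + t + 3)%N => k n k_gt nE.
have k_big : t%:R * (1 + rho) <= k%:R * (1 - c / 4).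
  rewrite -ler_pdivrMr; last by lra.
  apply/ltW/(lt_le_trans (truncnS_gt K)).
  by rewrite ler_nat (leq_ltn_trans _ k_gt) // -addnA leq_addr.
have {k_gt} t_lt_k : (t + 3 < k)%N by rewrite (leq_ltn_trans _ k_gt) // -addnA leq_addl.
have k_pos : 0 < k%:R :> R by rewrite ltr0n; lia.
have n_gt : (2 * k < n)%N by rewrite -(ltr_nat R) natrM nE; nra.
split; [lia | lia |].
set m := (n - k.+1)%N; set u := (k.-1 - t)%N.
have ratio : rho * (m - u)%:R <= u.+1%:R.
  have [top bot] : (m - u + 2 * k = n + t)%N /\ (u.+1 + t = k)%N by split; lia.
  have -> : (m - u)%:R = c * k%:R + t%:R - 2 * k%:R :> R.
    by rewrite -nE -natrM -natrD -top natrD addrK.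
  have -> : u.+1%:R = k%:R - t%:R :> R by rewrite -bot natrD addrK.
  have rho_ck : rho * (c - 2) * k%:R = c / 4 * k%:R by rewrite rho_c.
  nra.
have rho0 : 0 <= rho by lra.
have lower := binom_tail_lower rho0 (_ : t <= k.-1)%N ratio.
have C_pos : 0 < 'C(m, k.-1)%:R :> R by rewrite ltr0n bin_gt0; clear -n_gt; lia.
rewrite -(ltr_nat R) natr_sum; apply: lt_le_trans (lower _); last by clear -t_lt_k; lia.
by rewrite -[X in X < _]mulr1 ltr_pM2l.
Qed.

End BinomialTail.

Theorem mainTheorem10 (R : realType) (c : R) :
  (2 < c)%R -> (c < 4)%R ->
  exists k0 : nat, forall k n : nat, k0 < k -> (n%:R = c * k%:R :> R)%R ->
    intersecting (Akfam n k) /\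
    \sum_(0 <= l < k) 'C(n.-1, l) < #|diffs (Akfam n k)|.
Proof.
move=> c_gt2 c_lt4; have [k0 large_k] := binom_tail_dominates c_gt2 c_lt4.
exists k0 => k n k_gt nE; have [k_gt1 n_ge2k tail_lt] := large_k k n k_gt nE.
split; first exact: Akfam_intersecting.
have := diffs_lower_bound k_gt1 n_ge2k; lia.
Qed.
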